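(* Let $n, p, d$ be positive integers with $p \le n$, $d\ge 2$, let $b>0$, let $0<\epsilon<1$, and let $1 \le i \le n-p+1$. Consider a sequence of $n+p$ polynomials in two blocks of variables $\bm{x}=(x_1,\dots,x_n)$ and $\bm{\ell}=(\ell_1,\dots,\ell_p)$ consisting of: $i-1$ polynomials $x_k - \sigma_k$ ($1\le k\le i-1$) of bi-degree $(1,0)$; $p$ polynomials $f_1^{\bm A},\dots,f_p^{\bm A}$ of bi-degree $(d,0)$; $n-i$ polynomials (the entries of $[\ell_1\cdots\ell_p]\,\mathrm{jac}(\bm f^{\bm A}, i)$) of bi-degree $(d-1,1)$; and one polynomial $u_1\ell_1+\dots+u_p\ell_p-1$ of bi-degree $(0,1)$. Here $\bm f=(f_1,\dots,f_p)\subset\mathbb{Z}[x_1,\dots,x_n]$ has $\deg f_j\le d$, $\mathrm{ht}(f_j)\le b$; $\bm A\in \mathrm{GL}_n(\mathbb{Z})$ has entries of height in $O(\log(1/\epsilon)+n\log d)$; $f_j^{\bm A}(\bm x) = f_j(\bm A\bm x)$; $\mathrm{jac}(\bm f^{\bm A}, i)$ is the $p\times(n-i)$ matrix $(\partial f_j^{\bm A}/\partial x_k)_{1\le j\le p,\, i+1\le k\le n}$; and the integers $\sigma_k, u_j$ have height in $\widetilde{O}(\log(1/\epsilon)+n\log d)$. Let $\bm d_i = ((d_{j,1},d_{j,2}))_{1\le j\le n+p}$ be the sequence of these bi-degrees, and let the height bounds be $s_j\in\widetilde{O}(b+d\log(1/\epsilon)+dn)$ for the polynomials involving $\bm f^{\bm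 A}$ and $s_j\in \widetilde{O}(\log(1/\epsilon)+n\log d)$ for the remaining (linear) ones, with $\eta_j = s_j + \log(n+1)d_{j,1}+\log(p+1)d_{j,2}$. Then \[ \mathscr{C}_{\bm n}(\bm d_i) = \binom{n-i}{p-1} d^p (d-1)^{n-p-i+1} \quad\text{and}\quad \mathscr{H}_{\bm n}(\bm\eta_i,\bm d_i)\in \widetilde{O}\left(n(b+d\log(1/\epsilon)+dn)\binom{n}{p} d^p (d-1)^{n-p}\right). \]
   Context: Logarithms are base $2$; $\widetilde{O}$ omits poly-logarithmic factors. The height $\mathrm{ht}$ of a nonzero rational $a/q$ in lowest terms ($q>0$) is $\max(\log|a|,\log q)$; the height of a rational polynomial $g$ is the maximum of $\log v$ and the heights of the coefficients of $vg$, where $v$ is the lcm of the denominators of the coefficients of $g$. The bi-degree of a polynomial is the pair (degree in $\bm x$, degree in $\bm\ell$). With $\bm n=(n,p)$: $\mathscr{C}_{\bm n}(\bm d_i)$ is the sum of the coefficients of $\prod_{j=1}^{n+p}(d_{j,1}\theta_1+d_{j,2}\theta_2) \bmod \langle\theta_1^{n+1},\theta_2^{p+1}\rangle$, and $\mathscr{H}_{\bm n}(\bm\eta_i,\bm d_i)$ is the sum of the coefficients of $\prod_{j=1}^{n+p}(\eta_j\zeta+d_{j,1}\theta_1+d_{j,2}\theta_2) \bmod \langle\zeta^2,\theta_1^{n+1},\theta_2^{p+1}\rangle$, where $\zeta,\theta_1,\theta_2$ are new indeterminates. *)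

From HB Require Import structures.
From mathcomp Require Import all_boot all_order all_algebra.
From mathcomp Require Import reals exp.
Set Implicit Arguments. Unset Strict Implicit. Unset Printing Implicit Defensive.
Import Order.TTheory GRing.Theory Num.Theory.
Local Open Scope ring_scope.

Section Defs.
Variable R : realType.

Definition log2 (x : R) : R := ln x / ln 2.

(* C_n(d): sum of coefficients of prod_j (d_{j,1} th1 + d_{j,2} th2)
   mod <th1^{n+1}, th2^{p+1}>.  Bivariate polynomials are {poly {poly R}}:
   th1 = outer 'X, th2 = ('X)%:P; coefficient of th1^a th2^b is P`_a`_b. *)
Definition Cn (n p : nat) (ds : seq (nat * nat)) : R :=
  let P : {poly {poly R}} :=
    \prod_(dj <- ds) (dj.1%:R * 'X + ((dj.2%:R * 'X : {poly R}))%:P) in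
  \sum_(a < n.+1) \sum_(b < p.+1) (P`_a)`_b.

(* H_n(eta, d): sum of coefficients of prod_j (eta_j z + d_{j,1} th1 + d_{j,2} th2)
   mod <z^2, th1^{n+1}, th2^{p+1}>.  Trivariate polynomials {poly {poly {poly R}}}:
   z = outer 'X, th1 = ('X)%:P, th2 = ('X)%:P%:P; coefficient of z^c th1^a th2^b
   is P`_c`_a`_b.  The input is the sequence of triples (eta_j, d_{j,1}, d_{j,2}). *)
Definition Hn (n p : nat) (eds : seq (R * (nat * nat))) : R :=
  let P : {poly {poly {poly R}}} :=
    \prod_(e <- eds)
      ((e.1%:P%:P%:P : {poly {poly {poly R}}}) * 'X
       + ((e.2.1%:R * 'X : {poly {poly R}})
          + ((e.2.2%:R * 'X : {poly R}))%:P)%:P) in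
  \sum_(c < 2) \sum_(a < n.+1) \sum_(b < p.+1) ((P`_c)`_a)`_b.

(* The bi-degree sequence d_i, in the order of the paper:
   i-1 copies of (1,0) [x_k - sigma_k], p copies of (d,0) [f_j^A],
   n-i copies of (d-1,1) [entries of l * jac(f^A,i)], one (0,1) [u.l - 1]. *)
Definition bidegs (n p d i : nat) : seq (nat * nat) :=
  nseq i.-1 (1%N, 0%N) ++ nseq p (d, 0%N) ++ nseq (n - i) (d.-1, 1%N)
  ++ [:: (0%N, 1%N)].

Definition involves_fA (n p i j : nat) : bool := (i.-1 <= j)%N && (j < (n + p).-1)%N.

Definition etas (n p d i : nat) (s : nat -> R) : seq (R * (nat * nat)) :=
  [seq (s j.1 + log2 (n.+1)%:R * (j.2.1)%:R + log2 (p.+1)%:R * (j.2.2)%:R, j.2)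
  | j <- zip (iota 0 (n + p)) (bidegs n p d i)].

Definition softO_le (C : R) (k : nat) (x G : R) : Prop :=
  x <= C * G * (log2 (2 + G)) ^+ k.

End Defs.

(* The n + p forms of bi-degree [bidegs n p d i] multiply to
   theta1^(i-1) (d theta1)^p ((d-1) theta1 + theta2)^(n-i) theta2, of total
   degree n + p, so only the coefficient of theta1^n theta2^p survives the
   truncation in C_n, and it is the announced binomial term.
   In H_n the zeta-free part is C_n and the zeta-linear part is
   sum_j eta_j prod_(k <> j) L_k.  All coefficients are nonnegative, so bounding
   every eta_j by a common H leaves H times four products of degree n + p - 1,
   each of which meets the truncation window in at most two monomials, each at
   most n p^2 C(n,p) d^p (d-1)^(n-p).  Finally H = O~(b + d log(1/eps) + dn), and
   the factor p^2 disappears in the logarithm because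
   2^p <= C(n,p) d^p (d-1)^(n-p). *)

From HB Require Import structures.
From mathcomp Require Import all_boot all_order all_algebra.
From mathcomp Require Import reals exp.
From mathcomp Require Import ring lra zify.
Set Implicit Arguments.
Unset Strict Implicit.
Unset Printing Implicit Defensive.

Import Order.TTheory GRing.Theory Num.Theory.
Local Open Scope ring_scope.

Lemma leq_bin_pred N q : (0 < q)%N -> (q <= N)%N -> ('C(N, q.-1) <= q * 'C(N, q))%N.
Proof.
move=> q0 qN; have := mul_bin_left N q.-1; rewrite prednK // => ->.
by apply: leq_pmull; lia.
Qed.

Lemma leq_bin_near m N p j : (m <= N)%N -> (p <= N)%N -> (0 < p)%N ->
  (j <= p <= j + 2)%N -> ('C(m, j) <= p ^ 2 * 'C(N, p))%N.
Proof.
move=> mN pN p0 hj; apply: leq_trans (leq_bin2l _ mN) _.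
have [->|[->|[-> p1]]] : j = p \/ j = p.-1 \/ j = p.-2 /\ (1 < p)%N by lia.
- by apply: leq_pmull; rewrite expn_gt0 p0.
- have := @leq_bin_pred N p p0 pN; nia.
- have := @leq_bin_pred N p p0 pN.
  have : ('C(N, p.-2) <= p.-1 * 'C(N, p.-1))%N by apply: leq_bin_pred; lia.
  nia.
Qed.

Lemma leq_exp_pred d p0 p k q : (2 <= d)%N -> (p0 <= p)%N -> (p0 + k <= p + q)%N ->
  (d ^ p0 * d.-1 ^ k <= d ^ p * d.-1 ^ q)%N.
Proof.
move=> d2 le_p le_sum; have d1 : (0 < d.-1)%N by lia.
have [le_kq | lt_qk] := leqP k q.
  by apply: leq_mul; apply: leq_pexp2l; lia.
rewrite -(subnKC (ltnW lt_qk)) expnD mulnCA mulnC leq_pmul2r ?expn_gt0 ?d1 //.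
apply: leq_trans (_ : d ^ p0 * d ^ (k - q) <= _)%N.
  by rewrite leq_pmul2l ?expn_gt0 ?(ltnW d2) // leq_exp2r ?subn_gt0 //; lia.
by rewrite -expnD leq_pexp2l //; lia.
Qed.

Lemma leq_binom_coef n p d k0 p0 m b j : (2 <= d)%N -> (0 < p)%N -> (p <= n)%N ->
  (k0 <= n)%N -> (m <= n)%N -> (p0 <= p)%N -> (b <= 1)%N -> (p0 + m + b < n + p)%N ->
  (j <= m)%N -> (p.-1 <= b + j <= p)%N ->
  (k0 * d ^ p0 * d.-1 ^ (m - j) * 'C(m, j)
     <= n * p ^ 2 * ('C(n, p) * d ^ p * d.-1 ^ (n - p)))%N.
Proof.
move=> d2 p_gt0 pn k0n mn p0p b1 deg jm hj.
have le_pow : (d ^ p0 * d.-1 ^ (m - j) <= d ^ p * d.-1 ^ (n - p))%N.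
  by apply: leq_exp_pred => //; lia.
have le_bin : ('C(m, j) <= p ^ 2 * 'C(n, p))%N by apply: leq_bin_near => //; lia.
rewrite -(mulnA k0); apply: leq_trans (leq_mul (leq_mul k0n le_pow) le_bin) _.
by apply: eq_leq; ring.
Qed.

Lemma leq_exp2_bin_mul n p d : (p <= n)%N -> (2 <= d)%N ->
  (2 ^ p <= 'C(n, p) * d ^ p * (d - 1) ^ (n - p))%N.
Proof.
move=> pn d2; have le2d : (2 ^ p <= d ^ p)%N.
  by elim: (p) => // k IH; rewrite !expnS leq_mul.
apply: leq_trans le2d _; rewrite mulnAC leq_pmull // muln_gt0 bin_gt0 pn expn_gt0.
by rewrite subn_gt0 d2.
Qed.

Lemma mem_zip (T1 T2 : eqType) (s : seq T1) (t : seq T2) x y :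
  (x, y) \in zip s t -> x \in s /\ y \in t.
Proof.
elim: s t => [|a s IH] [|b t] //=.
rewrite in_cons => /orP [/eqP [-> ->]|/IH [xs yt]].
  by rewrite eqxx mem_head.
by rewrite !in_cons xs yt !orbT.
Qed.

Section TruncatedSum.
Variable R : realType.
Local Notation PP := {poly {poly R}}.

Definition linform (dj : nat * nat) : PP :=
  dj.1%:R * 'X + ((dj.2%:R * 'X : {poly R}))%:P.

Definition linprod (ds : seq (nat * nat)) : PP := \prod_(dj <- ds) linform dj.

Definition truncsum n p (Q : PP) : R := \sum_(a < n.+1) \sum_(b < p.+1) (Q`_a)`_b.

Lemma Cn_truncsum n p ds : Cn R n p ds = truncsum n p (linprod ds).
Proof. by []. Qed.

Lemma truncsum0 n p : truncsum n p 0 = 0.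
Proof. by rewrite /truncsum big1 // => a _; rewrite big1 // => b _; rewrite !coef0. Qed.

Lemma truncsumD n p A B : truncsum n p (A + B) = truncsum n p A + truncsum n p B.
Proof.
rewrite /truncsum -big_split; apply: eq_bigr => a _; rewrite -big_split.
by apply: eq_bigr => b _; rewrite !coefD.
Qed.

Lemma truncsumB n p A B : truncsum n p (A - B) = truncsum n p A - truncsum n p B.
Proof.
rewrite /truncsum -sumrB; apply: eq_bigr => a _; rewrite -sumrB.
by apply: eq_bigr => b _; rewrite !coefB.
Qed.

Lemma truncsumCM n p c A : truncsum n p (c%:P%:P * A) = c * truncsum n p A.
Proof.
rewrite /truncsum mulr_sumr; apply: eq_bigr => a _; rewrite mulr_sumr.
by apply: eq_bigr => b _; rewrite !coefCM.
Qed.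

Lemma truncsum_sum n p I (r : seq I) (P : pred I) (F : I -> PP) :
  truncsum n p (\sum_(i <- r | P i) F i) = \sum_(i <- r | P i) truncsum n p (F i).
Proof. exact: (big_morph _ (truncsumD n p) (truncsum0 n p)). Qed.

Definition monom (c : R) a b : PP := c%:P%:P * ('X^a * ('X^b)%:P).

Lemma coef_monom c a0 b0 a b :
  ((monom c a0 b0)`_a)`_b = c * ((a == a0) && (b == b0))%:R.
Proof.
rewrite /monom !coefCM coefXnM; case: ltnP => h.
  by rewrite coef0 (_ : (a == a0) = false) //; apply/negbTE; rewrite neq_ltn h.
rewrite coefC subn_eq0.
have -> : (a <= a0)%N = (a == a0) by rewrite eqn_leq h andbT.
by case: (a == a0); rewrite ?coef0 ?coefXn.
Qed.

Lemma truncsum_monom n p c a0 b0 :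
  truncsum n p (monom c a0 b0) = if (a0 <= n)%N && (b0 <= p)%N then c else 0.
Proof.
rewrite /truncsum.
under eq_bigr => a _ do under eq_bigr => b _ do
  rewrite coef_monom mulr_natr mulrb.
under eq_bigr => a _ do rewrite -big_mkcond (big_ord1_cond_eq _ _ (fun=> a == a0 :> nat)).
by rewrite -big_mkcond (big_ord1_cond_eq _ _ (fun=> (b0 < p.+1)%N)) !ltnS.
Qed.

Definition coef_nneg (Q : PP) := forall a b, 0 <= (Q`_a)`_b.

Lemma coef_nnegD A B : coef_nneg A -> coef_nneg B -> coef_nneg (A + B).
Proof. by move=> hA hB a b; rewrite !coefD addr_ge0. Qed.

Lemma coef_nnegM A B : coef_nneg A -> coef_nneg B -> coef_nneg (A * B).
Proof.
move=> hA hB a b; rewrite coefM coef_sum; apply: sumr_ge0 => i _.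
by rewrite coefM; apply: sumr_ge0 => j _; apply: mulr_ge0.
Qed.

Lemma coef_nneg_monom c a b : 0 <= c -> coef_nneg (monom c a b).
Proof. by move=> c0 a' b'; rewrite coef_monom mulr_ge0. Qed.

Lemma linform_monom dj : linform dj = monom dj.1%:R 1 0 + monom dj.2%:R 0 1.
Proof. by rewrite /linform /monom !polyC_natr polyCM; ring. Qed.

Lemma coef_nneg_linform dj : coef_nneg (linform dj).
Proof. by rewrite linform_monom; apply: coef_nnegD; apply: coef_nneg_monom. Qed.

Lemma coef_nneg_linprod ds : coef_nneg (linprod ds).
Proof.
apply: big_ind => [||dj _]; [|exact: coef_nnegM|exact: coef_nneg_linform].
by have := @coef_nneg_monom 1 0 0 ler01; rewrite /monom !expr0 polyC1 !mulr1.
Qed.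

Lemma truncsum_ge0 n p Q : coef_nneg Q -> 0 <= truncsum n p Q.
Proof. by move=> h; apply: sumr_ge0 => a _; apply: sumr_ge0 => b _. Qed.

Lemma ler_truncsum n p A B : coef_nneg (B - A) -> truncsum n p A <= truncsum n p B.
Proof. by move=> h; rewrite -subr_ge0 -truncsumB; apply: truncsum_ge0. Qed.


Definition binom_mon c e a b m : PP := monom c a b * linform (e, 1%N) ^+ m.

Lemma binom_monE c e a b m : binom_mon c e a b m =
  \sum_(j < m.+1) monom (c * e%:R ^+ (m - j) * 'C(m, j)%:R) (a + (m - j)) (b + j).
Proof.
rewrite /binom_mon /linform /= mul1r exprDn mulr_sumr; apply: eq_bigr => j _.
rewrite /monom -mulr_natr !polyCM !rmorphXn /= !polyC_natr !exprD exprMn.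
ring.
Qed.

Lemma truncsum_binom_mon n p c e a b m : truncsum n p (binom_mon c e a b m) =
  \sum_(j < m.+1) (if (a + (m - j) <= n)%N && (b + j <= p)%N
                   then c * e%:R ^+ (m - j) * 'C(m, j)%:R else 0).
Proof.
by rewrite binom_monE truncsum_sum; apply: eq_bigr => j _; rewrite truncsum_monom.
Qed.

(* The expansion has total degree n + p - 1, so only its monomials of degree
   p - 1 and p in theta2 can lie in the truncation window. *)
Lemma truncsum_binom_mon_le n p c e a b m B :
  (a + b + m).+1 = (n + p)%N ->
  (forall j, (j <= m)%N -> (p.-1 <= b + j <= p)%N ->
     (c * e ^ (m - j) * 'C(m, j) <= B)%N) ->
  truncsum n p (binom_mon c%:R e a b m) <= (2 * B)%:R.
Proof.
move=> deg hB; rewrite truncsum_binom_mon.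
have B0 : 0 <= B%:R :> R by [].
have term_le (j : 'I_m.+1) :
    (if (a + (m - j) <= n)%N && (b + j <= p)%N
     then c%:R * e%:R ^+ (m - j) * 'C(m, j)%:R else 0)
    <= (if j == (p - b)%N :> nat then B%:R else 0)
     + (if j == (p.-1 - b)%N :> nat then B%:R else 0) :> R.
  case: ifP => [/andP [h1 h2] | _]; last by case: ifP => _; case: ifP => _; lra.
  have wB : c%:R * e%:R ^+ (m - j) * 'C(m, j)%:R <= B%:R :> R.
    by rewrite -natrX -!natrM ler_nat; apply: hB; have := ltn_ord j; lia.
  have : (j == (p - b)%N :> nat) || (j == (p.-1 - b)%N :> nat).
    by have := ltn_ord j; lia.
  by case: (j == _ :> nat); case: (j == _ :> nat) => //= _; lra.
apply: le_trans (ler_sum _ (fun j _ => term_le j)) _.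
rewrite big_split /= -!big_mkcond !(big_ord1_eq _ (fun=> B%:R)) mulnC natrM.
by case: ifP => _; case: ifP => _; lra.
Qed.

Lemma linprod_cons dj ds : linprod (dj :: ds) = linform dj * linprod ds.
Proof. by rewrite /linprod big_cons. Qed.

Lemma linprod_cat ds1 ds2 : linprod (ds1 ++ ds2) = linprod ds1 * linprod ds2.
Proof. by rewrite /linprod big_cat. Qed.

Lemma linprod_nseq k dj : linprod (nseq k dj) = linform dj ^+ k.
Proof. by elim: k => [|k IH]; rewrite ?linprod_cons ?IH ?exprS // /linprod big_nil. Qed.

(* [omit1_sum ds] is the sum over j of the product of the [linform ds_k], k <> j;
   [omit1_wsum es] weights its j-th term by [es_j.1]. *)
Fixpoint omit1_sum (ds : seq (nat * nat)) : PP :=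
  if ds is dj :: s then linprod s + linform dj * omit1_sum s else 0.

Fixpoint omit1_wsum (es : seq (R * (nat * nat))) : PP :=
  if es is e :: s then e.1%:P%:P * linprod (map snd s) + linform e.2 * omit1_wsum s
  else 0.

Lemma omit1_sum_cat ds1 ds2 :
  omit1_sum (ds1 ++ ds2) = omit1_sum ds1 * linprod ds2 + linprod ds1 * omit1_sum ds2.
Proof.
elim: ds1 => [|dj s IH] /=; first by rewrite /linprod big_nil mul0r add0r mul1r.
by rewrite IH linprod_cat linprod_cons; ring.
Qed.

Lemma omit1_sum_nseq k dj : omit1_sum (nseq k dj) = k%:R * linform dj ^+ k.-1.
Proof.
elim: k => [|k IH] /=; first by rewrite mul0r.
rewrite IH linprod_nseq; case: k {IH} => [|k] /=.
  by rewrite !mul0r mulr0 addr0 mul1r.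
by rewrite exprS -[(k.+2)%:R]natr1 -[(k.+1)%:R]natr1; ring.
Qed.

Definition hprod (es : seq (R * (nat * nat))) : {poly PP} :=
  \prod_(e <- es) (e.1%:P%:P%:P * 'X + (linform e.2)%:P).

Lemma hprod_coef es :
  (hprod es)`_0 = linprod (map snd es) /\ (hprod es)`_1 = omit1_wsum es.
Proof.
elim: es => [|e s [IH0 IH1]]; first by rewrite /hprod /linprod !big_nil !coef1.
rewrite /hprod big_cons -/(hprod s) mulrDl !coefD -!mulrA !coefCM !coefXM /= IH0 IH1.
by rewrite linprod_cons mulr0 add0r.
Qed.

Lemma Hn_truncsum n p es :
  Hn n p es = truncsum n p (linprod (map snd es)) + truncsum n p (omit1_wsum es).
Proof.
have [<- <-] := hprod_coef es.
by rewrite /Hn big_ord_recl big_ord_recl big_ord0 addr0.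
Qed.

Lemma coef_nneg_omit1_wsum es H : (forall e, e \in es -> e.1 <= H) ->
  coef_nneg (H%:P%:P * omit1_sum (map snd es) - omit1_wsum es).
Proof.
elim: es => [|e s IH] /= hH; first by rewrite mulr0 subr0 => a b; rewrite !coef0.
have -> : H%:P%:P * (linprod (map snd s) + linform e.2 * omit1_sum (map snd s))
   - (e.1%:P%:P * linprod (map snd s) + linform e.2 * omit1_wsum s)
   = monom (H - e.1) 0 0 * linprod (map snd s)
     + linform e.2 * (H%:P%:P * omit1_sum (map snd s) - omit1_wsum s).
  by rewrite /monom !polyCB; ring.
apply: coef_nnegD; apply: coef_nnegM.
- by apply: coef_nneg_monom; rewrite subr_ge0 hH ?mem_head.
- exact: coef_nneg_linprod.
- exact: coef_nneg_linform.
- by apply: IH => e' he'; rewrite hH // in_cons he' orbT.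
Qed.

Lemma linform_k0 k : linform (k, 0%N) = k%:R * 'X.
Proof. by rewrite /linform /= mul0r polyC0 addr0. Qed.

Lemma linform_01 : linform (0%N, 1%N) = 'X%:P.
Proof. by rewrite /linform /= mul0r mul1r add0r. Qed.

Lemma linprod_bidegs n p d i :
  linprod (bidegs n p d i) = binom_mon (d ^ p)%:R d.-1 (i.-1 + p) 1 (n - i).
Proof.
rewrite /bidegs !linprod_cat !linprod_nseq !linform_k0 linprod_cons linform_01.
rewrite /linprod big_nil /binom_mon /monom !polyC_natr natrX exprD expr1 mul1r.
by rewrite mulr1 exprMn; ring.
Qed.

Lemma omit1_sum_bidegs n p d i :
  omit1_sum (bidegs n p d i) =
    binom_mon (i.-1 * d ^ p)%:R d.-1 (i.-1.-1 + p) 1 (n - i)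
  + binom_mon (p * d ^ p.-1)%:R d.-1 (i.-1 + p.-1) 1 (n - i)
  + binom_mon ((n - i) * d ^ p)%:R d.-1 (i.-1 + p) 1 (n - i).-1
  + binom_mon (d ^ p)%:R d.-1 (i.-1 + p) 0 (n - i).
Proof.
rewrite /bidegs !omit1_sum_cat !linprod_cat !omit1_sum_nseq !linprod_nseq !linform_k0.
rewrite /= /linprod big_nil big_seq1 linform_01 /binom_mon /monom !polyC_natr.
rewrite !natrM !natrX !exprD !expr1 !expr0 polyC1 mul1r !exprMn.
ring.
Qed.

Lemma binom_mon0 e a b m : binom_mon 0 e a b m = 0.
Proof. by rewrite /binom_mon /monom !polyC0 !mul0r. Qed.

Lemma truncsum_omit1_sum_bidegs_le n p d i :
  (0 < p)%N -> (p <= n)%N -> (2 <= d)%N -> (1 <= i)%N -> (i <= n - p + 1)%N ->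
  truncsum n p (omit1_sum (bidegs n p d i))
    <= (8 * (n * p ^ 2 * ('C(n, p) * d ^ p * d.-1 ^ (n - p))))%:R.
Proof.
move=> p0 pn d2 i1 ip; set B := (n * p ^ 2 * _)%N.
rewrite omit1_sum_bidegs !truncsumD.
apply: (le_trans (y := (2 * B)%:R + (2 * B)%:R + (2 * B)%:R + (2 * B)%:R)); last first.
  by rewrite -!natrD ler_nat; lia.
repeat apply: lerD.
- have [-> | i2] : i = 1%N \/ (2 <= i)%N by lia.
    by rewrite /= mul0n binom_mon0 truncsum0.
  apply: truncsum_binom_mon_le; first by lia.
  by move=> j jm hj; apply: (leq_binom_coef (b := 1)) => //; lia.
- apply: truncsum_binom_mon_le; first by lia.
  by move=> j jm hj; apply: (leq_binom_coef (b := 1)) => //; lia.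
- have [-> | ni] : (n - i = 0)%N \/ (1 <= n - i)%N by lia.
    by rewrite /= mul0n binom_mon0 truncsum0.
  apply: truncsum_binom_mon_le; first by lia.
  by move=> j jm hj; apply: (leq_binom_coef (b := 1)) => //; lia.
- apply: truncsum_binom_mon_le; first by lia.
  move=> j jm hj; rewrite -[(d ^ p)%N]mul1n.
  by apply: (leq_binom_coef (b := 0)) => //; lia.
Qed.

Lemma Cn_bidegs n p d i :
  (0 < p)%N -> (p <= n)%N -> (2 <= d)%N -> (1 <= i)%N -> (i <= n - p + 1)%N ->
  Cn R n p (bidegs n p d i)
  = ('C(n - i, p - 1) * d ^ p * (d - 1) ^ (n - p + 1 - i))%:R.
Proof.
move=> p0 pn d2 i1 ip.
rewrite Cn_truncsum linprod_bidegs truncsum_binom_mon.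
pose F j := (d ^ p)%:R * d.-1%:R ^+ (n - i - j) * 'C(n - i, j)%:R : R.
transitivity (\sum_(j < (n - i).+1 | j == p.-1 :> nat) F j).
  rewrite [RHS]big_mkcond; apply: eq_bigr => j _; congr (if _ then _ else _).
  by have := ltn_ord j; lia.
rewrite big_ord1_eq ifT; last by lia.
rewrite /F -natrX -!natrM !subn1 (_ : (n - i - p.-1 = n - p + 1 - i)%N); last by lia.
by rewrite mulnC mulnA.
Qed.

Lemma size_bidegs n p d i : (1 <= i <= n)%N -> size (bidegs n p d i) = (n + p)%N.
Proof. by move=> hi; rewrite /bidegs !size_cat !size_nseq /=; lia. Qed.

Lemma mem_bidegs n p d i dj : (1 <= d)%N -> dj \in bidegs n p d i ->
  (dj.1 <= d)%N /\ (dj.2 <= 1)%N.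
Proof.
rewrite /bidegs !mem_cat !mem_nseq !in_cons in_nil orbF => d1.
by case/or4P => [/andP [_ /eqP ->]|/andP [_ /eqP ->]|/andP [_ /eqP ->]|/eqP ->] /=; lia.
Qed.

Lemma map_snd_etas n p d i (s : nat -> R) : (1 <= i <= n)%N ->
  map snd (etas n p d i s) = bidegs n p d i.
Proof.
move=> hi; rewrite /etas -map_comp (eq_map (_ : _ \o _ =1 snd)) //.
by rewrite -/(unzip2 _) unzip2_zip // size_iota size_bidegs.
Qed.

Lemma Hn_etas_le n p d i (s : nat -> R) H :
  (0 < p)%N -> (p <= n)%N -> (2 <= d)%N -> (1 <= i)%N -> (i <= n - p + 1)%N ->
  0 <= H -> (forall e, e \in etas n p d i s -> e.1 <= H) ->
  Hn n p (etas n p d i s)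
    <= ('C(n, p) * d ^ p * (d - 1) ^ (n - p))%:R
       + H * (8 * (n * p ^ 2 * ('C(n, p) * d ^ p * (d - 1) ^ (n - p))))%:R.
Proof.
move=> p0 pn d2 i1 ip H0 etaH; have hi : (1 <= i <= n)%N by lia.
rewrite Hn_truncsum map_snd_etas // -Cn_truncsum Cn_bidegs // !subn1; apply: lerD.
  rewrite ler_nat -!mulnA leq_mul //; last first.
    by rewrite leq_mul // leq_pexp2l //; lia.
  apply: leq_trans (_ : 'C(n.-1, p.-1) <= _)%N; first by apply: leq_bin2l; lia.
  have n0 : (0 < n)%N by lia.
  rewrite -[in X in (_ <= X)%N](prednK p0) -[in X in (_ <= X)%N](prednK n0).
  by rewrite binS leq_addl.
apply: le_trans (ler_truncsum n p (coef_nneg_omit1_wsum etaH)) _.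
by rewrite truncsumCM map_snd_etas // ler_wpM2l // truncsum_omit1_sum_bidegs_le.
Qed.

End TruncatedSum.

Section Log2.
Variable R : realType.

Lemma ln2_gt0 : 0 < ln (2 : R).
Proof. by rewrite ln_gt0 // ltr1n. Qed.

Lemma log2_ge0 (x : R) : 1 <= x -> 0 <= log2 x.
Proof. by move=> x1; apply: divr_ge0; [exact: ln_ge0 | exact: ltW ln2_gt0]. Qed.

Lemma ler_log2 (x y : R) : 0 < x -> x <= y -> log2 x <= log2 y.
Proof.
move=> x0 xy; rewrite /log2 ler_pM2r ?invr_gt0 ?ln2_gt0 //.
by rewrite ler_ln // posrE (lt_le_trans x0 xy).
Qed.

Lemma log2_exp2 n : log2 ((2 : R) ^+ n) = n%:R.
Proof.
by rewrite /log2 lnXn // -[ln 2 *+ n]mulr_natr mulrAC divff ?mul1r // gt_eqF ?ln2_gt0.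
Qed.

Lemma log2_ge1 (x : R) : 2 <= x -> 1 <= log2 x.
Proof. by move=> x2; rewrite -[X in X <= _](log2_exp2 1) ler_log2 ?expr1. Qed.

Lemma log2_nat_le n m : (0 < n)%N -> (n <= 2 ^ m)%N -> log2 (n%:R : R) <= m%:R.
Proof.
by move=> n0 nm; rewrite -[X in _ <= X]log2_exp2 ler_log2 ?ltr0n // -natrX ler_nat.
Qed.

End Log2.

Section Heights.
Variable R : realType.

Lemma softO_le_widen C k (x G G' : R) : 0 <= G -> G <= G' ->
  softO_le C k x G -> softO_le (Num.max C 0) k x G'.
Proof.
move=> G0 GG' h; apply: le_trans h _.
have L0 : 0 <= log2 (2 + G) by apply: log2_ge0; lra.
have LL : log2 (2 + G) ^+ k <= log2 (2 + G') ^+ k.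
  by apply: lerXn2r; rewrite ?nnegrE ?log2_ge0 ?ler_log2 //; lra.
rewrite -!mulrA; apply: le_trans (_ : Num.max C 0 * (G * log2 (2 + G) ^+ k) <= _).
  by rewrite ler_wpM2r ?mulr_ge0 ?exprn_ge0 // le_max lexx.
by rewrite ler_wpM2l ?le_max ?lexx ?orbT // ler_pM ?exprn_ge0.
Qed.

Lemma etas_le C1 k1 n p d i (s : nat -> R) (G Gl : R) :
  (p <= n)%N -> (1 <= d)%N -> 0 <= Gl -> Gl <= G -> d%:R * n%:R <= G ->
  (forall j, (j < n + p)%N ->
     if involves_fA n p i j then softO_le C1 k1 (s j) G else softO_le C1 k1 (s j) Gl) ->
  forall e, e \in etas n p d i s -> e.1 <= (Num.max C1 0 + 2) * G * log2 (2 + G) ^+ k1.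
Proof.
move=> pn d1 Gl0 GlG dnG hs e /mapP [[j dj] /mem_zip [jn djb] ->] /=.
have [dj1 dj2] := mem_bidegs d1 djb.
have sj : s j <= Num.max C1 0 * G * log2 (2 + G) ^+ k1.
  rewrite mem_iota add0n in jn; have := hs j (andP jn).2.
  by case: involves_fA => h; apply: (softO_le_widen _ _ h); lra.
have log_n : log2 (n.+1)%:R * dj.1%:R <= d%:R * n%:R :> R.
  rewrite mulrC ler_pM ?log2_ge0 ?ler1n ?ler_nat //.
  by apply: log2_nat_le => //; apply: ltn_expl.
have log_p : log2 (p.+1)%:R * dj.2%:R <= d%:R * n%:R :> R.
  apply: le_trans (_ : (p%:R : R) * 1 <= _).
    by rewrite ler_pM ?log2_ge0 ?ler1n ?lern1 ?log2_nat_le // ltn_expl.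
  by rewrite mulr1 -natrM ler_nat (leq_trans pn) // leq_pmull.
have GL : G <= G * log2 (2 + G) ^+ k1.
  by rewrite ler_peMr ?exprn_ege1 ?log2_ge1; lra.
lra.
Qed.

Lemma softO_absorb (K G : R) k n p D : 0 <= K -> 1 <= G -> (0 < n)%N -> (2 ^ p <= D)%N ->
  D%:R + K * G * log2 (2 + G) ^+ k * (8 * (n * p ^ 2 * D))%:R
  <= (1 + 8 * K) * (n%:R * G * D%:R) * log2 (2 + n%:R * G * D%:R) ^+ (k + 2).
Proof.
move=> K0 G1 n0 pD; set GD := n%:R * G * D%:R; set La := log2 (2 + GD).
have D1 : 1 <= D%:R :> R by rewrite ler1n; apply: leq_trans pD; rewrite expn_gt0.
have n1 : 1 <= n%:R :> R by rewrite ler1n.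
have DGD : D%:R <= GD by rewrite /GD ler_peMl ?mulr_ege1 //; lra.
have GGD : G <= GD by rewrite /GD mulrAC ler_peMl ?mulr_ege1 //; lra.
have La1 : 1 <= La by apply: log2_ge1; lra.
have LLa : log2 (2 + G) <= La by apply: ler_log2; lra.
have pLa : p%:R <= La.
  have pD' : (2 : R) ^+ p <= D%:R by rewrite -natrX ler_nat.
  by rewrite -[X in X <= _]log2_exp2 ler_log2 ?exprn_gt0 //; lra.
have Lp : log2 (2 + G) ^+ k * p%:R ^+ 2 <= La ^+ (k + 2).
  rewrite exprD ler_pM ?exprn_ge0 ?log2_ge0 //; try lra.
  - by apply: lerXn2r; rewrite ?nnegrE ?log2_ge0 //; lra.
  - by apply: lerXn2r; rewrite ?nnegrE //; lra.
have GDLa : GD <= GD * La ^+ (k + 2) by rewrite ler_peMr ?exprn_ege1; lra.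
have -> : K * G * log2 (2 + G) ^+ k * (8 * (n * p ^ 2 * D))%:R
          = 8 * K * GD * (log2 (2 + G) ^+ k * p%:R ^+ 2).
  by rewrite /GD !natrM; ring.
have := ler_wpM2l (_ : 0 <= 8 * K * GD) Lp; rewrite ?mulr_ge0 //; lra.
Qed.

End Heights.

Theorem lemma1 (R : realType) :
  (forall (n p d i : nat),
      (0 < p)%N -> (p <= n)%N -> (2 <= d)%N -> (1 <= i)%N -> (i <= n - p + 1)%N ->
      Cn R n p (bidegs n p d i)
      = ('C(n - i, p - 1) * d ^ p * (d - 1) ^ (n - p + 1 - i))%:R)
  /\
  (forall (C1 : R) (k1 : nat), exists (C : R) (k : nat),
    forall (n p d i : nat) (b eps : R) (s : nat -> R),
      (0 < p)%N -> (p <= n)%N -> (2 <= d)%N -> (1 <= i)%N -> (i <= n - p + 1)%N ->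
      0 < b -> 0 < eps -> eps < 1 ->
      let Gf := b + d%:R * log2 (eps^-1) + d%:R * n%:R in
      let Gl := log2 (eps^-1) + n%:R * log2 d%:R in
      (forall j, (j < n + p)%N ->
         if involves_fA n p i j then softO_le C1 k1 (s j) Gf
         else softO_le C1 k1 (s j) Gl) ->
      softO_le C k (Hn n p (etas n p d i s))
        (n%:R * Gf * ('C(n, p) * d ^ p * (d - 1) ^ (n - p))%:R)).
Proof.
split=> [n p d i *|C1 k1]; first exact: Cn_bidegs.
exists (1 + 8 * (Num.max C1 0 + 2)), (k1 + 2)%N.
move=> n p d i b eps s p0 pn d2 i1 ip b0 eps0 eps1 Gf Gl hs.
have leps : 0 <= log2 eps^-1 by rewrite log2_ge0 // invf_ge1 // ltW.
have dR : 2 <= d%:R :> R by rewrite ler_nat.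
have nR : 1 <= n%:R :> R by rewrite ler1n; lia.
have dleps : log2 eps^-1 <= d%:R * log2 eps^-1 by rewrite ler_peMl //; lra.
have dnGf : d%:R * n%:R <= Gf by rewrite /Gf; lra.
have dn1 : 1 <= d%:R * n%:R :> R by rewrite mulr_ege1 //; lra.
have logd : n%:R * log2 d%:R <= d%:R * n%:R :> R.
  by rewrite [d%:R * _]mulrC ler_wpM2l // log2_nat_le //; [lia | exact/ltnW/ltn_expl].
have Gl0 : 0 <= Gl by rewrite /Gl addr_ge0 // mulr_ge0 // log2_ge0 //; lra.
have K0 : 0 <= Num.max C1 0 + 2 by rewrite addr_ge0 // le_max lexx orbT.
have GlGf : Gl <= Gf by rewrite /Gl /Gf; lra.
apply: le_trans (Hn_etas_le p0 pn d2 i1 ip _ (etas_le pn (ltnW d2) Gl0 GlGf dnGf hs)) _.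
  by rewrite !mulr_ge0 ?exprn_ge0 ?log2_ge0 //; lra.
apply: softO_absorb => //; [lra | lia | exact: leq_exp2_bin_mul].
Qed.
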